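(* Let $\mathfrak{A}$ be a $(\circ,\wedge,\mathsf{A})$-algebra and $\theta$ a representation of $\mathfrak{A}$ by partial functions. If $\theta$ is join complete, then $\theta$ is meet complete.
   Context: A $(\circ,\wedge,\mathsf{A})$-algebra is a set with two binary operations $\circ,\wedge$ and one unary operation $\mathsf{A}$. An algebra of partial functions of this signature is a set of partial functions, with base $X$ the union of all their domains and ranges, closed under: composition $f\circ g=\{(x,z)\mid \exists y\,(x,y)\in f,(y,z)\in g\}$; intersection; antidomain $\mathsf{A}(f)=\{(x,x)\mid x\in X, x\notin\mathrm{dom}(f)\}$. A representation by partial functions is an isomorphism onto such an algebra. The order on $\mathfrak{A}$ is $a\le b\iff a\wedge b=a$. A representation $\theta$ is meet complete if for every nonempty $S\subseteq\mathfrak{A}$ such that $\bigwedge S$ exists, $\theta(\bigwedge S)=\bigcap\theta[S]$; it is join complete if for every $S\subseteq\mathfrak{A}$ such that $\bigvee S$ exists, $\theta(\bigvee S)=\bigcup\theta[S]$. *)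

Definition brel (X : Type) := X -> X -> Prop.

Definition functional {X : Type} (f : brel X) : Prop :=
  forall x y z, f x y -> f x z -> y = z.

Definition rcomp {X : Type} (f g : brel X) : brel X :=
  fun x z => exists y, f x y /\ g y z.

Definition rinter {X : Type} (f g : brel X) : brel X :=
  fun x y => f x y /\ g x y.

(* Antidomain relative to the base X (X is the whole base type). *)
Definition rantidom {X : Type} (f : brel X) : brel X :=
  fun x y => x = y /\ ~ (exists z, f x z).

Definition releq {X : Type} (f g : brel X) : Prop :=
  forall x y, f x y <-> g x y.

Definition is_pfun_representation {car X : Type}
    (comp meet : car -> car -> car) (antidom : car -> car)
    (theta : car -> brel X) : Prop :=
  (forall a, functional (theta a)) /\
  (forall a b, releq (theta a) (theta b) -> a = b) /\
  (forall a b, releq (theta (comp a b)) (rcomp (theta a) (theta b))) /\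
  (forall a b, releq (theta (meet a b)) (rinter (theta a) (theta b))) /\
  (forall a, releq (theta (antidom a)) (rantidom (theta a))) /\
  (forall x : X, exists a, (exists y, theta a x y) \/ (exists y, theta a y x)).

Definition ale {car : Type} (meet : car -> car -> car) (a b : car) : Prop :=
  meet a b = a.

Definition is_inf {car : Type} (meet : car -> car -> car)
    (S : car -> Prop) (m : car) : Prop :=
  (forall s, S s -> ale meet m s) /\
  (forall l, (forall s, S s -> ale meet l s) -> ale meet l m).

Definition is_sup {car : Type} (meet : car -> car -> car)
    (S : car -> Prop) (m : car) : Prop :=
  (forall s, S s -> ale meet s m) /\
  (forall u, (forall s, S s -> ale meet s u) -> ale meet m u).

Definition meet_complete {car X : Type} (meet : car -> car -> car)
    (theta : car -> brel X) : Prop :=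
  forall (S : car -> Prop) (m : car), (exists s, S s) -> is_inf meet S m ->
    forall x y, theta m x y <-> (forall s, S s -> theta s x y).

Definition join_complete {car X : Type} (meet : car -> car -> car)
    (theta : car -> brel X) : Prop :=
  forall (S : car -> Prop) (m : car), is_sup meet S m ->
    forall x y, theta m x y <-> (exists s, S s /\ theta s x y).

From Stdlib Require Import Classical.

Set Implicit Arguments.

(* Fix s0 in S and let m be the infimum of S. The element s0 is the supremum
   of m together with the restrictions A(s0 /\ s) ; s0 of s0 to the points
   outside the domain of s0 /\ s, for s in S. Join completeness then writes
   theta s0 as the union of theta m and those restrictions; a pair lying in
   every theta s lies in theta s0 but in none of the restrictions, hence in
   theta m. *)

Definition rdom {X : Type} (f : brel X) (x : X) : Prop := exists y, f x y.

Section PartialFunctionRepresentation.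

Variables (car X : Type) (comp meet : car -> car -> car) (antidom : car -> car).
Variable theta : car -> brel X.

Hypothesis Hrep : is_pfun_representation comp meet antidom theta.

Let theta_functional : forall a, functional (theta a) := proj1 Hrep.
Let theta_inj : forall a b, releq (theta a) (theta b) -> a = b :=
  proj1 (proj2 Hrep).
Let theta_comp : forall a b, releq (theta (comp a b)) (rcomp (theta a) (theta b)) :=
  proj1 (proj2 (proj2 Hrep)).
Let theta_meet : forall a b, releq (theta (meet a b)) (rinter (theta a) (theta b)) :=
  proj1 (proj2 (proj2 (proj2 Hrep))).
Let theta_antidom : forall a, releq (theta (antidom a)) (rantidom (theta a)) :=
  proj1 (proj2 (proj2 (proj2 (proj2 Hrep)))).

Lemma ale_theta_sub a b :
  ale meet a b -> forall x y, theta a x y -> theta b x y.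
Proof.
  intros Hab x y H. unfold ale in Hab. rewrite <- Hab in H.
  apply theta_meet in H. apply H.
Qed.

Lemma theta_sub_ale a b :
  (forall x y, theta a x y -> theta b x y) -> ale meet a b.
Proof.
  intros H. apply theta_inj. intros x y. rewrite (theta_meet a b x y).
  unfold rinter. split; [tauto | auto].
Qed.

Definition restrict_off (a b : car) : car := comp (antidom a) b.

Lemma theta_restrict_off a b x y :
  theta (restrict_off a b) x y <-> ~ rdom (theta a) x /\ theta b x y.
Proof.
  unfold restrict_off. rewrite (theta_comp (antidom a) b x y). split.
  - intros [z [H1 H2]]. apply theta_antidom in H1. destruct H1 as [-> H1]. auto.
  - intros [H1 H2]. exists x. split; auto. apply theta_antidom. split; auto.
Qed.

Lemma restrict_off_ale a b : ale meet (restrict_off a b) b.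
Proof.
  apply theta_sub_ale. intros x y H. apply theta_restrict_off in H. apply H.
Qed.

Lemma theta_meet_dom a b x y :
  theta a x y -> rdom (theta (meet a b)) x -> theta b x y.
Proof.
  intros Hxy [z Hz]. apply theta_meet in Hz. destruct Hz as [Hz1 Hz2].
  rewrite (theta_functional Hxy Hz1). exact Hz2.
Qed.

Lemma theta_meet_dichotomy a b x y :
  theta a x y -> theta b x y \/ theta (restrict_off (meet a b) a) x y.
Proof.
  intros Hxy. destruct (classic (rdom (theta (meet a b)) x)) as [Hd | Hd].
  - left. exact (theta_meet_dom Hxy Hd).
  - right. apply theta_restrict_off. auto.
Qed.

Section Infimum.

Variables (S : car -> Prop) (m s0 : car).
Hypothesis m_inf : is_inf meet S m.
Hypothesis S_s0 : S s0.

Definition inf_cover (t : car) : Prop :=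
  t = m \/ exists s, S s /\ t = restrict_off (meet s0 s) s0.

Lemma restrict_off_lower_bound u :
  (forall t, inf_cover t -> ale meet t u) ->
  forall s, S s -> ale meet (restrict_off (meet s0 u) s0) s.
Proof.
  intros Hu s Hs. apply theta_sub_ale. intros x y Hxy.
  apply theta_restrict_off in Hxy. destruct Hxy as [Hnd Hxs0].
  destruct (theta_meet_dichotomy s Hxs0) as [Hs' | Hoff]; [exact Hs' |].
  exfalso. apply Hnd. exists y. apply theta_meet. split; auto.
  apply (ale_theta_sub (Hu _ (or_intror (ex_intro _ s (conj Hs eq_refl))))).
  exact Hoff.
Qed.

Lemma is_sup_inf_cover : is_sup meet inf_cover s0.
Proof.
  destruct m_inf as [m_lb m_glb]. split.
  - intros t [-> | [s [_ ->]]]; [exact (m_lb s0 S_s0) | apply restrict_off_ale].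
  - intros u Hu. apply theta_sub_ale. intros x y Hxy.
    destruct (theta_meet_dichotomy u Hxy) as [Hu' | Hoff]; [exact Hu' |].
    apply (ale_theta_sub (Hu m (or_introl eq_refl))).
    apply (ale_theta_sub (m_glb _ (restrict_off_lower_bound Hu))). exact Hoff.
Qed.

Lemma inf_cover_theta_inf t x y :
  inf_cover t -> theta t x y -> (forall s, S s -> theta s x y) -> theta m x y.
Proof.
  intros [-> | [s [Hs ->]]] Ht Hall; [exact Ht |].
  apply theta_restrict_off in Ht. destruct Ht as [Hnd _].
  exfalso. apply Hnd. exists y. apply theta_meet. split; apply Hall; auto.
Qed.

End Infimum.

End PartialFunctionRepresentation.

Unset Implicit Arguments.

Theorem mainTheorem3 (car : Type) (comp meet : car -> car -> car)
    (antidom : car -> car) (X : Type) (theta : car -> brel X)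
    (Hrep : is_pfun_representation comp meet antidom theta) :
  join_complete meet theta -> meet_complete meet theta.
Proof.
  intros Hjoin S m [s0 Hs0] Hinf x y. split.
  - intros H s Hs. exact (ale_theta_sub Hrep (proj1 Hinf s Hs) _ _ H).
  - intros Hall.
    destruct (proj1 (Hjoin _ _ (is_sup_inf_cover Hrep s0 Hinf Hs0) x y) (Hall s0 Hs0))
      as [t [Ht Htxy]].
    exact (inf_cover_theta_inf Hrep Hs0 x y Ht Htxy Hall).
Qed.
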